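(* Let $A,B\subset\{0,1\}^n$ be increasing events, let $\omega,\xi$ be independent uniform random elements of $\{0,1\}^n$. Then $$\mathrm P[A\circ B]\le\mathbb P[(A,B)\text{ occurs disjointly on }(\omega,\xi)]\le\mathrm P[A]\,\mathrm P[B].$$
   Context: $\mathrm P$ is the uniform measure on $\{0,1\}^n$. $(x,I)$ is a witness for $A$ if $\{y: y|_I=x|_I\}\subset A$; $(A,B)$ occurs disjointly on $(x,y)$ if there are disjoint $I,J\subset[n]$ with $(x,I)$ a witness for $A$ and $(y,J)$ a witness for $B$; $A\circ B=\{x:(A,B)\text{ occurs disjointly on }(x,x)\}$. An event is increasing if its indicator is increasing for the coordinatewise order. *)

From mathcomp Require Import all_boot all_order all_algebra.
Set Implicit Arguments. Unset Strict Implicit. Unset Printing Implicit Defensive.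
Import Order.TTheory GRing.Theory Num.Theory.
Local Open Scope ring_scope.

Definition cube (n : nat) := {ffun 'I_n -> bool}.

Definition witness n (A : {set cube n}) (x : cube n) (I : {set 'I_n}) : bool :=
  [forall y : cube n, [forall i in I, y i == x i] ==> (y \in A)].

Definition occurs_disj n (A B : {set cube n}) (x y : cube n) : bool :=
  [exists I : {set 'I_n}, exists J : {set 'I_n},
     [&& [disjoint I & J], witness A x I & witness B y J]].

Definition box n (A B : {set cube n}) : {set cube n} :=
  [set x | occurs_disj A B x x].

Definition cube_le n (x y : cube n) : bool := [forall i, x i ==> y i].
Definition increasing n (A : {set cube n}) : Prop :=
  forall x y : cube n, cube_le x y -> x \in A -> y \in A.

(* Uniform measure on {0,1}^n, and the product (independent) uniform measure
   on pairs (omega, xi). *)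
Definition Pu n (A : {set cube n}) : rat := #|A|%:R / (2 ^ n)%:R.
Definition Pu2 n (E : {set cube n * cube n}) : rat := #|E|%:R / (4 ^ n)%:R.

(** Let [D_K] be the set of pairs [(x, y)] such that [(A, B)] occurs disjointly
    on [(x, z)], where [z] takes the coordinates of [y] on [K] and those of [x]
    elsewhere.  Then [D_{set0}] is [A o B] times the whole cube and [D_{setT}]
    is the disjoint-occurrence event on independent copies, so it suffices that
    [#|D_K|] grows when one coordinate [j] is added to [K].  Grouping pairs into
    orbits of the four flips of the [j]-th coordinates of [x] and [y], this
    reduces to the four-point inequality
    [[u v] + [u' v'] <= [u v'] + [u' v]] for [u j = v j], where [']
    flips coordinate [j]: monotonicity handles the case where [(u, v)] works,
    and otherwise a witness pair for [(u', v')] can avoid coordinate [j] on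
    one side.  The upper bound holds since disjoint occurrence on [(x, y)]
    forces [x \in A] and [y \in B]. *)
From mathcomp Require Import all_boot all_order all_algebra.
From mathcomp Require Import zify.
Import Order.TTheory GRing.Theory Num.Theory.

Set Implicit Arguments. Unset Strict Implicit. Unset Printing Implicit Defensive.

Section Cube.
Variable n : nat.
Implicit Types (A B : {set cube n}) (u v x y : cube n) (I K : {set 'I_n}) (j : 'I_n).

Definition flip j u : cube n := [ffun i => if i == j then ~~ u i else u i].

Definition mix K x y : cube n := [ffun i => if i \in K then y i else x i].

Lemma flipK j : involutive (flip j).
Proof. by move=> u; apply/ffunP => i; rewrite !ffunE; case: eqP => // ->; rewrite negbK. Qed.

Lemma flip_at j u : flip j u j = ~~ u j.
Proof. by rewrite ffunE eqxx. Qed.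

Lemma cube_le_refl u : cube_le u u.
Proof. by apply/forallP => i; apply: implybb. Qed.

Lemma cube_le_flip j u : u j = false -> cube_le u (flip j u).
Proof.
by move=> uj; apply/forallP => i; rewrite ffunE; case: eqP => [->|_]; rewrite ?uj ?implybb.
Qed.

Lemma witness_eq_on A x y I :
  {in I, forall i, x i = y i} -> witness A x I -> witness A y I.
Proof.
move=> exy /forallP wx; apply/forallP => z; apply/implyP => /forallP zy.
apply: (implyP (wx z)); apply/forallP => i; apply/implyP => iI.
by rewrite exy //; apply: (implyP (zy i)).
Qed.

Lemma witness_mono A x y I :
  increasing A -> cube_le x y -> witness A x I -> witness A y I.
Proof.
move=> incA /forallP lexy /forallP wx; apply/forallP => z; apply/implyP => /forallP zy.
pose z' : cube n := [ffun i => if i \in I then x i else z i].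
apply: (incA z').
  apply/forallP => i; rewrite ffunE; case: ifP => iI; last exact: implybb.
  by have /eqP -> := implyP (zy i) iI; apply: lexy.
apply: (implyP (wx z')); apply/forallP => i; rewrite ffunE.
by case: (i \in I); rewrite /= ?eqxx.
Qed.

Lemma witness_mem A x I : witness A x I -> x \in A.
Proof. by move/forallP/(_ x)/implyP; apply; apply/forallP => i; rewrite eqxx implybT. Qed.

Lemma occurs_disj_mem A B x y : occurs_disj A B x y -> (x, y) \in setX A B.
Proof.
case/existsP => I /existsP[J /and3P[_ wA wB]].
by rewrite inE (witness_mem wA) (witness_mem wB).
Qed.

Lemma occurs_disj_mono A B u u' v v' : increasing A -> increasing B ->
  cube_le u u' -> cube_le v v' -> occurs_disj A B u v -> occurs_disj A B u' v'.
Proof.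
move=> incA incB leu lev /existsP[I /existsP[J /and3P[dIJ wA wB]]].
apply/existsP; exists I; apply/existsP; exists J.
by rewrite dIJ (witness_mono incA leu wA) (witness_mono incB lev wB).
Qed.

(* Coordinate [j] lies outside the witness set on at least one side. *)
Lemma occurs_disj_flip A B j u v : occurs_disj A B u v ->
  occurs_disj A B (flip j u) v || occurs_disj A B u (flip j v).
Proof.
case/existsP => I /existsP[J /and3P[dIJ wA wB]].
have flip_out (w : cube n) K : j \notin K -> {in K, forall i, w i = flip j w i}.
  by move=> jK i iK; rewrite ffunE; case: eqP => // eij; rewrite -eij iK in jK.
apply/orP; case jI: (j \in I); [right | left];
  apply/existsP; exists I; apply/existsP; exists J; rewrite dIJ.
- by rewrite wA (witness_eq_on (flip_out _ _ (negbT (disjointFr dIJ jI))) wB).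
- by rewrite wB (witness_eq_on (flip_out _ _ (negbT jI)) wA).
Qed.

Section Exchange.
Variables (A B : {set cube n}).
Hypotheses (incA : increasing A) (incB : increasing B).

Let od u v : nat := occurs_disj A B u v.

Lemma occurs_disj_exchange0 j u v : u j = false -> v j = false ->
  od u v + od (flip j u) (flip j v) <= od u (flip j v) + od (flip j u) v.
Proof.
move=> uj vj; rewrite /od.
case uv: (occurs_disj A B u v).
  rewrite (occurs_disj_mono incA incB (cube_le_refl u) (cube_le_flip vj) uv).
  rewrite (occurs_disj_mono incA incB (cube_le_flip uj) (cube_le_refl v) uv).
  by case: (occurs_disj _ _ _ _).
have := @occurs_disj_flip A B j (flip j u) (flip j v); rewrite !flipK.
by case: (occurs_disj A B (flip j u) (flip j v)) => // /(_ isT); lia.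
Qed.

Lemma occurs_disj_exchange j u v : u j = v j ->
  od u v + od (flip j u) (flip j v) <= od u (flip j v) + od (flip j u) v.
Proof.
move=> euv; case uj: (u j); last by apply: occurs_disj_exchange0; rewrite -?euv.
have := @occurs_disj_exchange0 j (flip j u) (flip j v).
by rewrite !flipK !flip_at -euv uj => /(_ erefl erefl); lia.
Qed.

End Exchange.

Lemma mix0 x y : mix set0 x y = x.
Proof. by apply/ffunP => i; rewrite ffunE inE. Qed.

Lemma mixT x y : mix setT x y = y.
Proof. by apply/ffunP => i; rewrite ffunE inE. Qed.

Lemma mix_notin j K x y : j \notin K -> mix K x y j = x j.
Proof. by move=> jK; rewrite ffunE (negbTE jK). Qed.

Lemma mix_flipl_notin j K x y : j \notin K -> mix K (flip j x) y = flip j (mix K x y).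
Proof.
move=> jK; apply/ffunP => i; case: (eqVneq i j) => [->|ne];
  by rewrite !ffunE ?inE ?eqxx ?(negbTE ne) ?(negbTE jK).
Qed.

Lemma mix_flipr_notin j K x y : j \notin K -> mix K x (flip j y) = mix K x y.
Proof.
move=> jK; apply/ffunP => i; case: (eqVneq i j) => [->|ne];
  by rewrite !ffunE ?inE ?eqxx ?(negbTE ne) ?(negbTE jK).
Qed.

Lemma mix_flipl_setU1 j K x y : mix (j |: K) (flip j x) y = mix (j |: K) x y.
Proof.
by apply/ffunP => i; case: (eqVneq i j) => [->|ne]; rewrite !ffunE ?inE ?eqxx ?(negbTE ne).
Qed.

Lemma mix_flipr_setU1 j K x y : mix (j |: K) x (flip j y) = flip j (mix (j |: K) x y).
Proof.
by apply/ffunP => i; case: (eqVneq i j) => [->|ne]; rewrite !ffunE ?inE ?eqxx ?(negbTE ne).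
Qed.

Lemma mix_setU1 j K x y : j \notin K ->
  mix (j |: K) x y = if y j == x j then mix K x y else flip j (mix K x y).
Proof.
move=> jK; case: eqP => exy; apply/ffunP => i; case: (eqVneq i j) => [->|ne];
  rewrite !ffunE ?inE ?eqxx ?(negbTE ne) //=; rewrite (negbTE jK) //.
by case: (y j) (x j) exy => -[].
Qed.

End Cube.

Section Counting.
Variables (T : finType) (f : T -> T).
Hypothesis f_inj : injective f.

Lemma card_preim_sum (S : {set T}) : #|S| = \sum_t (f t \in S : nat).
Proof.
rewrite -(card_preimset S f_inj) -sum1_card big_mkcond /=.
by apply: eq_bigr => t _; rewrite inE; case: (f t \in S).
Qed.

End Counting.

Section Interpolation.
Variables (n : nat) (A B : {set cube n}).
Hypotheses (incA : increasing A) (incB : increasing B).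
Implicit Types (K : {set 'I_n}) (j : 'I_n) (S : {set cube n * cube n}).

Definition disj_mix K : {set cube n * cube n} :=
  [set p | occurs_disj A B p.1 (mix K p.1 p.2)].

Definition flip2 j (a b : bool) (p : cube n * cube n) : cube n * cube n :=
  (if a then flip j p.1 else p.1, if b then flip j p.2 else p.2).

Lemma flip2_inj j a b : injective (flip2 j a b).
Proof.
apply: (can_inj (g := flip2 j a b)) => -[x y].
by rewrite /flip2; case: a; case: b; rewrite /= ?flipK.
Qed.

Definition flip_count j S p : nat :=
  (flip2 j false false p \in S : nat) + (flip2 j false true p \in S : nat)
  + (flip2 j true false p \in S : nat) + (flip2 j true true p \in S : nat).

Lemma card_flip_count j S : 4 * #|S| = \sum_p flip_count j S p.
Proof.
rewrite /flip_count !big_split /= -!(card_preim_sum (@flip2_inj _ _ _)).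
by rewrite !mulSn mul0n addn0 !addnA.
Qed.

Let od u v : nat := occurs_disj A B u v.

Lemma flip_count_notin j K x y : j \notin K ->
  let z := mix K x y in
  flip_count j (disj_mix K) (x, y) = (od x z + od (flip j x) (flip j z)).*2.
Proof.
move=> jK; rewrite /flip_count /flip2 !inE /=.
by rewrite !mix_flipr_notin // !mix_flipl_notin // /od; lia.
Qed.

Lemma flip_count_setU1 j K x y : j \notin K ->
  let z := mix K x y in
  flip_count j (disj_mix (j |: K)) (x, y)
  = od x z + od x (flip j z) + od (flip j x) z + od (flip j x) (flip j z).
Proof.
move=> jK; rewrite /flip_count /flip2 !inE /=.
rewrite !mix_flipl_setU1 !mix_flipr_setU1 mix_setU1 //.
by case: eqP => _; rewrite ?flipK /od; lia.
Qed.

Lemma card_disj_mix_setU1 j K : j \notin K -> #|disj_mix K| <= #|disj_mix (j |: K)|.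
Proof.
move=> jK; rewrite -(leq_pmul2l (isT : 0 < 4)) !(card_flip_count j).
apply: leq_sum => -[x y] _; rewrite flip_count_notin // flip_count_setU1 //.
have := occurs_disj_exchange incA incB (esym (mix_notin x y jK)).
by rewrite /od; lia.
Qed.

Lemma card_disj_mix0 K : #|disj_mix set0| <= #|disj_mix K|.
Proof.
elim: {K}#|K| {-2}K (erefl #|K|) => [|m IHm] K cardK.
  by rewrite (cards0_eq cardK).
have [j jK] : {j | j \in K} by apply/sigW/card_gt0P; rewrite cardK.
have cardKj : #|K :\ j| = m by move: cardK; rewrite (cardsD1 j K) jK add1n => -[].
rewrite -(setD1K jK); apply: leq_trans (IHm _ cardKj) (card_disj_mix_setU1 _).
by rewrite setD11.
Qed.

Lemma disj_mix0 : disj_mix set0 = setX (box A B) setT.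
Proof. by apply/setP => -[x y]; rewrite !inE /= mix0 andbT. Qed.

Lemma disj_mixT : disj_mix setT = [set p | occurs_disj A B p.1 p.2].
Proof. by apply/setP => -[x y]; rewrite !inE /= mixT. Qed.

End Interpolation.

Local Open Scope ring_scope.

Lemma Pu_setT n : Pu [set: cube n] = 1.
Proof.
by rewrite /Pu cardsT card_ffun card_bool card_ord divff // pnatr_eq0 expn_eq0.
Qed.

Lemma Pu2_setX n (A B : {set cube n}) : Pu2 (setX A B) = Pu A * Pu B.
Proof.
have square_pow2 : (4 ^ n = 2 ^ n * 2 ^ n)%N by rewrite -expnMn.
by rewrite /Pu2 /Pu cardsX square_pow2 !natrM invfM mulrACA.
Qed.

Lemma ler_Pu2 n (E F : {set cube n * cube n}) : (#|E| <= #|F|)%N -> Pu2 E <= Pu2 F.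
Proof. by move=> leEF; rewrite ler_wpM2r ?invr_ge0 ?ler0n ?ler_nat. Qed.

Theorem mainTheorem7 (n : nat) (A B : {set cube n}) :
  increasing A -> increasing B ->
  Pu (box A B) <= Pu2 [set p : cube n * cube n | occurs_disj A B p.1 p.2]
  /\ Pu2 [set p : cube n * cube n | occurs_disj A B p.1 p.2] <= Pu A * Pu B.
Proof.
move=> incA incB; split.
  rewrite -[Pu _]mulr1 -(Pu_setT n) -Pu2_setX -disj_mix0 -disj_mixT.
  exact/ler_Pu2/card_disj_mix0.
rewrite -Pu2_setX; apply/ler_Pu2/subset_leq_card/subsetP => -[x y].
by rewrite inE; apply: occurs_disj_mem.
Qed.
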